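(* Let $L\subset\mathbb{R}^{2n}$ be a Lagrangian submanifold of the form $L=\{(q,\nabla F(q)):q\in\mathbb{R}^n\}$ for a cubic polynomial generating function $F:\mathbb{R}^n\to\mathbb{R}$. Then the outer symplectic billiard relation associated with $L$ is completely integrable: the $n$ functions $G_j(Q,P)=P_j-\frac{\partial F}{\partial Q_j}(Q)$, $j=1,\dots,n$, on $\mathbb{R}^{2n}$ pairwise Poisson commute and are invariant under the outer symplectic billiard relation, i.e. $G_j(A)=G_j(B)$ for all $j$ whenever $A,B\in\mathbb{R}^{2n}$ are in outer symplectic billiard relation with respect to $L$.
   Context: $\mathbb{R}^{2n}$ has coordinates $(Q,P)$, $Q,P\in\mathbb{R}^n$, and symplectic form $\omega=\sum_i dP_i\wedge dQ_i$. Two points $A,B\in\mathbb{R}^{2n}$ are in outer symplectic billiard relation with respect to $L$ if $X=\tfrac12(A+B)\in L$ and $B-A$ is symplectically orthogonal to $T_XL$; since $L$ is Lagrangian, this means $A=X+W$, $B=X-W$ for some $X\in L$, $W\in T_XL$. *)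

From HB Require Import structures.
From mathcomp Require Import all_boot all_order all_algebra.
From mathcomp Require Import mpoly.
Set Implicit Arguments. Unset Strict Implicit. Unset Printing Implicit Defensive.
Import Order.TTheory GRing.Theory Num.Theory.
Local Open Scope ring_scope.

Section OSB.
Variables (R : realFieldType) (n : nat).

Definition phase := (('I_n -> R) * ('I_n -> R))%type.

Definition Qidx (i : 'I_n) : 'I_(n + n) := lshift n i.
Definition Pidx (i : 'I_n) : 'I_(n + n) := rshift n i.

Definition pt (A : phase) : 'I_(n + n) -> R :=
  fun k => match split k with inl i => A.1 i | inr i => A.2 i end.

Definition liftQ (f : {mpoly R[n]}) : {mpoly R[n + n]} :=
  comp_mpoly [tuple 'X_(Qidx i) | i < n] f.

Definition Gfun (F : {mpoly R[n]}) (j : 'I_n) : {mpoly R[n + n]} :=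
  'X_(Pidx j) - liftQ (F^`M(j)).

(* Poisson bracket for omega = sum_i dP_i /\ dQ_i *)
Definition poisson (f g : {mpoly R[n + n]}) : {mpoly R[n + n]} :=
  \sum_(i < n) (f^`M(Pidx i) * g^`M(Qidx i) - f^`M(Qidx i) * g^`M(Pidx i)).

Definition omega (u v : phase) : R :=
  \sum_(i < n) (u.2 i * v.1 i - v.2 i * u.1 i).

Definition onL (F : {mpoly R[n]}) (X : phase) : Prop :=
  forall i, X.2 i = (F^`M(i)).@[X.1].

Definition tangentL (F : {mpoly R[n]}) (X : phase) (W : phase) : Prop :=
  exists v : 'I_n -> R,
    W.1 = v /\ forall j, W.2 j = \sum_(i < n) ((F^`M(j))^`M(i)).@[X.1] * v i.

Definition osb_rel (F : {mpoly R[n]}) (A B : phase) : Prop :=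
  let X : phase := (fun i => (A.1 i + B.1 i) / 2, fun i => (A.2 i + B.2 i) / 2) in
  let D : phase := (fun i => B.1 i - A.1 i, fun i => B.2 i - A.2 i) in
  onL F X /\ forall W, tangentL F X W -> omega D W = 0.

End OSB.

From HB Require Import structures.
From mathcomp Require Import all_boot all_order all_algebra.
From mathcomp Require Import mpoly ring lra.
Import GRing.Theory Num.Theory.
Set Implicit Arguments. Unset Strict Implicit. Unset Printing Implicit Defensive.
Local Open Scope ring_scope.

(* The derivatives of G_j are dG_j/dP = e_j and dG_j/dQ = - Hess F(Q) e_j, so
   {G_j, G_k} = d_k d_j F - d_j d_k F = 0 by the symmetry of mixed partials.
   The tangent space of L at X = (q, grad F(q)) consists of the (v, Hess F(q) v);
   symplectic orthogonality of B - A to (e_j, Hess F(q) e_j) says that the jump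
   B_P_j - A_P_j equals (Hess F(q) (B_Q - A_Q))_j.  As d_j F is quadratic, the
   midpoint rule is exact for it, so this is also the jump of d_j F from A_Q to
   B_Q, where q = (A_Q + B_Q) / 2.  Hence G_j(A) = G_j(B). *)

Lemma sum_eq_natr_mul (R : pzRingType) (m : nat) (a : 'I_m) (d : 'I_m -> R) :
  \sum_(i < m) (a == i)%:R * d i = d a.
Proof.
rewrite (bigD1 a) //= eqxx mul1r big1 ?addr0 // => i /negbTE.
by rewrite eq_sym => ->; rewrite mul0r.
Qed.

Lemma sum_mul_eq_natr (R : pzRingType) (m : nat) (a : 'I_m) (d : 'I_m -> R) :
  \sum_(i < m) d i * (a == i)%:R = d a.
Proof.
by rewrite -[RHS](sum_eq_natr_mul a); apply: eq_bigr => i _; rewrite mulr_natr mulr_natl.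
Qed.

Lemma mdeg_le2 (n : nat) (m : 'X_{1..n}) : (mdeg m <= 2)%N ->
  [\/ m = 0%MM, exists a, m = U_(a)%MM | exists a b, m = (U_(b) + U_(a))%MM].
Proof.
move=> le2; have [/eqP|nz] := eqVneq (mdeg m) 0%N.
  by rewrite mdeg_eq0 => /eqP; constructor 1.
have [a ma] : exists a, m a != 0%N.
  apply/existsP; apply: contraR nz; rewrite negb_exists => /forallP m0.
  by rewrite mdegE big1 // => i _; apply/eqP/negbNE/m0.
have em : m = (m - U_(a) + U_(a))%MM by rewrite submK ?lep1mP.
move: le2 nz; rewrite em mdegD mdeg1 addn1 ltnS.
have [/eqP|] := eqVneq (mdeg (m - U_(a))) 0%N.
  by rewrite mdeg_eq0 => /eqP -> _ _; constructor 2; exists a; rewrite add0m.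
move=> nz1 le1 _; have /mdeg1P [b /eqP ->] : mdeg (m - U_(a)) == 1%N.
  by move: nz1 le1; case: (mdeg _) => [|[]].
by constructor 3; exists a, b.
Qed.

Section MpolyRing.
Variable R : nzRingType.

Lemma mderivXU (n : nat) (k i : 'I_n) : ('X_k : {mpoly R[n]})^`M(i) = (k == i)%:R.
Proof.
rewrite mderivX mnm1E; case: eqP => [->|_]; last by rewrite scale0r.
by rewrite scale1r -{1}[U_(i)%MM]add0m addmK mpolyX0.
Qed.

Lemma mpoly_ind_ring (n : nat) (P : {mpoly R[n]} -> Prop) :
  P 1 -> (forall i, P 'X_i) ->
  (forall p q, P p -> P q -> P (p + q)) ->
  (forall p q, P p -> P q -> P (p * q)) ->
  (forall c p, P p -> P (c *: p)) ->
  forall p, P p.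
Proof.
move=> P1 PX PD PM PZ p; elim/mpolyind: p => [|c m p _ _ Pp].
  by rewrite -(scale0r (1 : {mpoly R[n]})); apply: PZ.
apply: PD => //; apply: PZ; rewrite mpolyXE_id.
apply: (big_ind P) => // i _; elim: (m i) => [|e Pe]; first by rewrite expr0.
by rewrite exprS; apply: PM.
Qed.

Lemma msize_mderiv (n : nat) (p : {mpoly R[n]}) (i : 'I_n) :
  (msize (p^`M(i)) <= (msize p).-1)%N.
Proof.
rewrite msizeE; apply/bigmax_leqP_seq => m; rewrite mcoeff_msupp mcoeff_mderiv => nz _.
have : (m + U_(i))%MM \in msupp p.
  by rewrite mcoeff_msupp; apply: contraNneq nz => ->; rewrite mul0rn.
by move/msize_mdeg_lt; rewrite mdegD mdeg1 addn1 ltn_predRL.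
Qed.

End MpolyRing.

Section MpolyComRing.
Variable R : comNzRingType.

Lemma mderiv_comp_mpoly (n k : nat) (lq : n.-tuple {mpoly R[k]})
    (p : {mpoly R[n]}) (i : 'I_k) :
  (p \mPo lq)^`M(i) = \sum_(j < n) (p^`M(j) \mPo lq) * (tnth lq j)^`M(i).
Proof.
elim/mpoly_ind_ring: p => [|a|p q Dp Dq|p q Dp Dq|c p Dp].
- rewrite comp_mpoly1 -mpolyC1 mderivC big1 // => j _.
  by rewrite mderivC comp_mpoly0 mul0r.
- rewrite comp_mpolyXU -tnth_nth.
  by under eq_bigr do rewrite mderivXU rmorph_nat; rewrite sum_eq_natr_mul.
- rewrite comp_mpolyD !mderivD Dp Dq -big_split; apply: eq_bigr => j _ /=.
  by rewrite mderivD comp_mpolyD mulrDl.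
- rewrite rmorphM mderivM Dp Dq mulr_suml mulr_sumr -big_split.
  by apply: eq_bigr => j _ /=; rewrite mderivM comp_mpolyD !rmorphM /=; ring.
- rewrite comp_mpolyZ !mderivZ Dp scaler_sumr; apply: eq_bigr => j _.
  by rewrite mderivZ comp_mpolyZ scalerAl.
Qed.

End MpolyComRing.

Section CentralDifference.
Variables (R : comNzRingType) (n : nat) (x d : 'I_n -> R).

Definition central_difference_exact (p : {mpoly R[n]}) : Prop :=
  p.@[fun i => x i + d i] - p.@[fun i => x i - d i] =
  2 * \sum_(i < n) (p^`M(i)).@[x] * d i.

Lemma central_difference_exactD p q : central_difference_exact p ->
  central_difference_exact q -> central_difference_exact (p + q).
Proof.
rewrite /central_difference_exact !mevalD opprD addrACA => -> ->.
rewrite -mulrDr -big_split; congr (_ * _); apply: eq_bigr => i _ /=.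
by rewrite mderivD mevalD mulrDl.
Qed.

Lemma central_difference_exactZ c p : central_difference_exact p ->
  central_difference_exact (c *: p).
Proof.
rewrite /central_difference_exact !mevalZ -mulrBr => ->.
rewrite mulrCA mulr_sumr; congr (_ * _); apply: eq_bigr => i _.
by rewrite mderivZ mevalZ mulrA.
Qed.

Lemma central_difference_exactX (m : 'X_{1..n}) : (mdeg m <= 2)%N ->
  central_difference_exact 'X_[m].
Proof.
rewrite /central_difference_exact.
case/mdeg_le2 => [->|[a ->]|[a [b ->]]].
- rewrite mpolyX0 !meval1 subrr big1 ?mulr0 // => i _.
  by rewrite -mpolyC1 mderivC meval0 mul0r.
- rewrite !mevalXU; under eq_bigr do rewrite mderivXU rmorph_nat.
  by rewrite sum_eq_natr_mul; ring.
- rewrite mpolyXD !mevalM !mevalXU.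
  under eq_bigr do rewrite mderivM !mderivXU mevalD !mevalM !rmorph_nat !mevalXU.
  under eq_bigr do rewrite mulrDl -!mulrA.
  by rewrite big_split /= -!mulr_sumr !sum_eq_natr_mul; ring.
Qed.

Lemma central_difference_exact_quadratic (p : {mpoly R[n]}) :
  (msize p <= 3)%N -> central_difference_exact p.
Proof.
move=> size_p; rewrite (mpolyE p) big_seq.
apply: (big_ind central_difference_exact).
- rewrite /central_difference_exact !meval0 subr0 big1 ?mulr0 // => i _.
  by rewrite mderiv0 meval0 mul0r.
- exact: central_difference_exactD.
move=> m /msize_mdeg_lt lt_m; apply/central_difference_exactZ/central_difference_exactX.
by rewrite -ltnS (leq_trans lt_m).
Qed.

End CentralDifference.

Lemma quadratic_increment_midpoint (R : numFieldType) (n : nat) (p : {mpoly R[n]})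
    (x y : 'I_n -> R) : (msize p <= 3)%N ->
  p.@[y] - p.@[x] =
  \sum_(i < n) (p^`M(i)).@[fun i => (x i + y i) / 2] * (y i - x i).
Proof.
move=> size_p.
pose mid i := (x i + y i) / 2; pose half i := (y i - x i) / 2.
have two_nz : (2 : R) != 0 by rewrite pnatr_eq0.
have -> : p.@[y] = p.@[fun i => mid i + half i].
  by apply: meval_eq => i; rewrite /mid /half; field.
have -> : p.@[x] = p.@[fun i => mid i - half i].
  by apply: meval_eq => i; rewrite /mid /half; field.
rewrite central_difference_exact_quadratic // mulr_sumr.
by apply: eq_bigr => i _; rewrite /half; field.
Qed.

Section PhaseSpace.
Variables (R : realFieldType) (n : nat).
Implicit Types (f F : {mpoly R[n]}) (A B : phase R n).

Lemma pt_Qidx A i : pt A (Qidx i) = A.1 i.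
Proof. by rewrite /pt /Qidx -[lshift n i]/(unsplit (inl i)) unsplitK. Qed.

Lemma pt_Pidx A i : pt A (Pidx i) = A.2 i.
Proof. by rewrite /pt /Pidx -[rshift n i]/(unsplit (inr i)) unsplitK. Qed.

Lemma liftQ_meval f A : (liftQ f).@[pt A] = f.@[A.1].
Proof.
rewrite /liftQ comp_mpoly_meval; apply: meval_eq => i.
by rewrite tnth_mktuple mevalXU pt_Qidx.
Qed.

Lemma mderiv_liftQ_Pidx f i : (liftQ f)^`M(Pidx i) = 0.
Proof.
rewrite mderiv_comp_mpoly big1 // => j _.
by rewrite tnth_mktuple mderivXU eq_lrshift mulr0.
Qed.

Lemma mderiv_liftQ_Qidx f i : (liftQ f)^`M(Qidx i) = liftQ (f^`M(i)).
Proof.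
rewrite mderiv_comp_mpoly.
under eq_bigr do rewrite tnth_mktuple mderivXU (inj_eq (@lshift_inj _ _)) eq_sym.
exact: sum_mul_eq_natr.
Qed.

Lemma mderiv_Gfun_Pidx F j i : (Gfun F j)^`M(Pidx i) = (j == i)%:R.
Proof.
by rewrite mderivB mderivXU mderiv_liftQ_Pidx subr0 (inj_eq (@rshift_inj _ _)).
Qed.

Lemma mderiv_Gfun_Qidx F j i : (Gfun F j)^`M(Qidx i) = - liftQ (F^`M(j)^`M(i)).
Proof. by rewrite mderivB mderivXU mderiv_liftQ_Qidx eq_sym eq_lrshift sub0r. Qed.

Lemma poisson_Gfun F j k : poisson (Gfun F j) (Gfun F k) = 0.
Proof.
rewrite /poisson; under eq_bigr do rewrite !mderiv_Gfun_Pidx !mderiv_Gfun_Qidx.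
by rewrite sumrB sum_eq_natr_mul sum_mul_eq_natr mderiv_comm subrr.
Qed.

Lemma Gfun_meval F j A : (Gfun F j).@[pt A] = A.2 j - (F^`M(j)).@[A.1].
Proof. by rewrite mevalB mevalXU pt_Pidx liftQ_meval. Qed.

Lemma osb_rel_momentum_jump F A B j : osb_rel F A B ->
  B.2 j - A.2 j =
  \sum_(i < n) ((F^`M(j))^`M(i)).@[fun i => (A.1 i + B.1 i) / 2] * (B.1 i - A.1 i).
Proof.
case=> _ orth; set q := fun i => (A.1 i + B.1 i) / 2.
pose e_j i : R := (j == i)%:R.
have /orth : tangentL F (q, fun i => (A.2 i + B.2 i) / 2)
    (e_j, fun l => \sum_(i < n) ((F^`M(l))^`M(i)).@[q] * e_j i) by exists e_j.
rewrite /omega /e_j /= sumrB sum_mul_eq_natr.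
move/subr0_eq ->; apply: eq_bigr => i _.
by rewrite sum_mul_eq_natr mderiv_comm.
Qed.

End PhaseSpace.

Theorem mainTheorem5 (R : realFieldType) (n : nat) (F : {mpoly R[n]}) :
  msize F = 4%N ->
  (forall j k : 'I_n, poisson (Gfun F j) (Gfun F k) = 0) /\
  (forall A B : phase R n, osb_rel F A B ->
     forall j : 'I_n, (Gfun F j).@[pt A] = (Gfun F j).@[pt B]).
Proof.
move=> size_F; split=> [j k | A B AB j]; first exact: poisson_Gfun.
have size_Fj : (msize (F^`M(j)) <= 3)%N by rewrite (leq_trans (msize_mderiv _ _)) ?size_F.
have := osb_rel_momentum_jump j AB.
rewrite -(quadratic_increment_midpoint _ _ size_Fj) !Gfun_meval.
by move=> jump; lra.
Qed.
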